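(* Let $P = u_1;\ldots;u_k$ ($k\ge 1$) be any PGLD program whose basic instructions are of the form $f.m$ with $f\in\mathrm{Foci}$, $m\in\mathrm{Meth}$. Let $t_P$ be the molecular dynamics state reached from the initial state $t_{\mathrm{init}}$ by executing the PGA program $\mathrm{pgldmd}(P)$, i.e. by applying $\mathrm{eff}$ successively for the methods of its instructions in order. Then $$|P|_{\mathrm{PGLD}} = \tau_{\mathrm{tau}}\big(|I| /_{\mathsf{md}} \mathrm{MDS}_{t_P}\big).$$
   Context: Threads. Let $A$ be a set of basic actions, $\tau\notin A$. Threads are built from $\mathsf S$ (termination), $\mathsf D$ (deadlock) and postconditional composition $x\unlhd a\unrhd y$ for $a\in A\cup\{\tau\}$ (perform $a$, then continue as $x$ if the reply is true, as $y$ if false); $a\circ x$ abbreviates $x\unlhd a\unrhd x$, and $x\unlhd\tau\unrhd y=\tau\circ x$. Threads are taken in the projective limit model: projections are $\pi_0(x)=\mathsf D$, $\pi_{n+1}(\mathsf S)=\mathsf S$, $\pi_{n+1}(\mathsf D)=\mathsf D$, $\pi_{n+1}(x\unlhd a\unrhd y)=\pi_n(x)\unlhd a\unrhd\pi_n(y)$; two threads are equal iff all their projections are equal; every guarded system of recursion equations has a unique solution. PGA. A PGA program is a finite, or eventually periodic infinite, sequence $v_1v_2\ldots$ (written with $;$ and $Y^\omega=Y;Y;\ldots$) of primitive instructions: basic instruction $a$, positive test $+a$, negative test $-a$, forward jump $\#l$ ($l\in\mathbb N$), termination $!$. Its behaviour $|X|$ is $T_1$ where: $T_i=\mathsf D$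 if $i$ exceeds the length; if $v_i=a$ then $T_i=a\circ T_{i+1}$; if $v_i=+a$ then $T_i=T_{i+1}\unlhd a\unrhd T_{i+2}$; if $v_i=-a$ then $T_i=T_{i+2}\unlhd a\unrhd T_{i+1}$; if $v_i=\#l$ then $T_i=T_{i+l}$ for $l>0$ and $T_i=\mathsf D$ for $l=0$; if $v_i=!$ then $T_i=\mathsf S$; and $T_i=\mathsf D$ whenever the chain of jumps starting at position $i$ is infinite. PGLD. A PGLD program $u_1;\ldots;u_k$ consists of instructions $a$, $+a$, $-a$ (as in PGA) and absolute jumps $\#\#l$ ($l\in\mathbb N$). Its behaviour is $|P|_{\mathrm{PGLD}}=|(\psi_1(u_1);\ldots;\psi_k(u_k);!;!)^\omega|$ where $\psi_j(\#\#l)=\#(l-j)$ if $j\le l\le k$, $\psi_j(\#\#l)=\#(k+2-(j-l))$ if $0<l<j$, $\psi_j(\#\#l)=!$ if $l=0$ or $l>k$, and $\psi_j(u)=u$ for non-jump $u$. Molecular dynamics. Fix a finite set $\mathrm{Spot}$ of spots with a total order $\le$; finite disjoint sets $\mathrm{Foci}$ (foci) and $\mathrm{Meth}$ (methods) with $\mathrm{Foci},\mathrm{Meth}\subseteq\mathrm{Spot}$; a finite set $\mathrm{Field}$ containing distinct fields $\mathsf{stop},\mathsf{ajmp},\mathsf{focus},\mathsf{method},\mathsf{pos},\mathsf{neg}$; an infinite countable set $\mathrm{PAtom}$ of proto-atoms, $\bot\notin\mathrm{PAtom}$, with a bijection $\mathrm{proatom}:\mathbb N_{\ge1}\to\mathrm{PAtom}$.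 The basic actions are $f.m$ ($f\in\mathrm{Foci},m\in\mathrm{Meth}$) and $\mathsf{md}.m$ for the molecular dynamics methods $m$ below, where $\mathsf{md}$ is a focus name not in $\mathrm{Foci}$. A state is $\uparrow$ or a pair $\langle\sigma,\alpha\rangle$ with $\sigma:\mathrm{Spot}\to\mathrm{PAtom}\cup\{\bot\}$, $\alpha$ a map from a finite set $\mathrm{dom}(\alpha)\subseteq\mathrm{PAtom}$ (the atoms) assigning to each atom $a$ a map $\alpha(a)$ from a finite set of fields to $\mathrm{PAtom}\cup\{\bot\}$, with all values of $\sigma$ and of each $\alpha(a)$ in $\mathrm{dom}(\alpha)\cup\{\bot\}$. $t_{\mathrm{init}}$ is the state with $\mathrm{dom}(\alpha)=\emptyset$ (so $\sigma\equiv\bot$). For each method $m$ and state $t$ there is a new state $\mathrm{eff}(m,t)$ and a yield $\mathrm{yld}(m,t)\in\{T,F,M,B\}$; unless stated, the state is unchanged. In state $\langle\sigma,\alpha\rangle$ (with $s,s'\in\mathrm{Spot}$, $v\in\mathrm{Field}$; ''$v$ is a field of $s$'' means $\sigma(s)\ne\bot$ and $v\in\mathrm{dom}(\alpha(\sigma(s)))$): $\mathsf{create}(s)$: with $a=\mathrm{proatom}(n+1)$, $n=\max\{n' : \mathrm{proatom}(n')\in\mathrm{dom}(\alpha)\}$ ($\max\emptyset=0$), set $\sigma(s):=a$, add atom $a$ with no fields; yield $T$. $\mathsf{setspot}(s,s')$: $\sigma(s):=\sigma(s')$; $T$. $\mathsf{clearspot}(s)$: $\sigma(s):=\bot$; $T$.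 $\mathsf{equal}(s,s')$: yield $T$ iff $\sigma(s)=\sigma(s')$, else $F$. $\mathsf{undef}(s)$: $T$ iff $\sigma(s)=\bot$, else $F$. $\mathsf{addfield}(s,v)$: if $\sigma(s)\ne\bot$ and $v$ is not a field of $s$, add field $v$ with content $\bot$ to atom $\sigma(s)$, yield $T$; else $F$. $\mathsf{rmvfield}(s,v)$: if $v$ is a field of $s$, remove it, $T$; else $F$. $\mathsf{hasfield}(s,v)$: $T$ iff $v$ is a field of $s$, else $F$. $\mathsf{setfield}(s,v,s')$: if $v$ is a field of $s$, set $\alpha(\sigma(s))(v):=\sigma(s')$, $T$; else $F$. $\mathsf{getfield}(s,s',v)$: if $v$ is a field of $s'$, set $\sigma(s):=\alpha(\sigma(s'))(v)$, $T$; else $F$. $\mathsf{genact}(s,s')$: if $\sigma(s)\ne\bot$, $\sigma(s')\ne\bot$, some $f'\in\mathrm{Foci}$ has $\sigma(f')=\sigma(s)$ and some $m'\in\mathrm{Meth}$ has $\sigma(m')=\sigma(s')$: state unchanged, yield $M$, and the action is transformed into $f.m$ with $f$ the $\le$-least such $f'$ and $m$ the $\le$-least such $m'$; otherwise yield $B$ and new state $\uparrow$. In state $\uparrow$ every method yields $B$ and leads to $\uparrow$. $\mathrm{MDS}_t$ denotes the service in state $t$. Use operator. For a thread $p$ and state $t$, $p/_{\mathsf{md}}\mathrm{MDS}_t$ is determined by: $\mathsf S/\ldots=\mathsf S$; $\mathsf D/\ldots=\mathsf D$; $(\tau\circ x)/_{\mathsf{md}}\mathrm{MDS}_t=\tau\circ(x/_{\mathsf{md}}\mathrm{MDS}_t)$;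 $(x\unlhd g.m\unrhd y)/_{\mathsf{md}}\mathrm{MDS}_t=(x/_{\mathsf{md}}\mathrm{MDS}_t)\unlhd g.m\unrhd(y/_{\mathsf{md}}\mathrm{MDS}_t)$ for $g\ne\mathsf{md}$; for $a=\mathsf{md}.m$ and $t'=\mathrm{eff}(m,t)$: $(x\unlhd a\unrhd y)/_{\mathsf{md}}\mathrm{MDS}_t$ equals $\tau\circ(x/_{\mathsf{md}}\mathrm{MDS}_{t'})$ if the yield is $T$, $\tau\circ(y/_{\mathsf{md}}\mathrm{MDS}_{t'})$ if $F$, $(x\unlhd f.m'\unrhd y)/_{\mathsf{md}}\mathrm{MDS}_{t'}$ if $M$ with transformed action $f.m'$, and $\mathsf D$ if $B$; for infinite $p$, $\pi_n(p/_{\mathsf{md}}H)=\pi_n(\pi_n(p)/_{\mathsf{md}}H)$. Abstraction. $\tau_{\mathrm{tau}}(p)=\mathsf D$ if $p$ starts with infinitely many $\tau$'s; otherwise $\tau_{\mathrm{tau}}(\mathsf S)=\mathsf S$, $\tau_{\mathrm{tau}}(\mathsf D)=\mathsf D$, $\tau_{\mathrm{tau}}(\tau\circ x)=\tau_{\mathrm{tau}}(x)$, $\tau_{\mathrm{tau}}(x\unlhd a\unrhd y)=\tau_{\mathrm{tau}}(x)\unlhd a\unrhd\tau_{\mathrm{tau}}(y)$ for $a\ne\tau$. Representation. Fix pairwise distinct spots $s,u,v,s_1,\ldots,s_{k+2}\in\mathrm{Spot}\setminus(\mathrm{Foci}\cup\mathrm{Meth})$. In the PGA programs below every instruction has focus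 $\mathsf{md}$ (omitted). For $P=u_1;\ldots;u_k$ with distinct occurring foci $f_1,\ldots,f_n$ and distinct occurring methods $m_1,\ldots,m_{n'}$: $\mathrm{pgldmd}(P)=\mathsf{create}(f_1);\ldots;\mathsf{create}(f_n);\mathsf{create}(m_1);\ldots;\mathsf{create}(m_{n'});\mathsf{create}(s_1);\ldots;\mathsf{create}(s_{k+2});\rho_1(u_1);\ldots;\rho_k(u_k);\mathsf{addfield}(s_{k+1},\mathsf{stop});\mathsf{addfield}(s_{k+2},\mathsf{stop});\mathsf{setspot}(s,s_1);!$, where for $u_j\in\{f.m,+f.m,-f.m\}$, $\rho_j(u_j)=\mathsf{addfield}(s_j,\mathsf{focus});\mathsf{addfield}(s_j,\mathsf{method});\mathsf{addfield}(s_j,\mathsf{pos});\mathsf{addfield}(s_j,\mathsf{neg});\mathsf{setfield}(s_j,\mathsf{focus},f);\mathsf{setfield}(s_j,\mathsf{method},m);\mathsf{setfield}(s_j,\mathsf{pos},s_{p});\mathsf{setfield}(s_j,\mathsf{neg},s_{q})$ with $(p,q)=(j+1,j+1)$ for $f.m$, $(j+1,j+2)$ for $+f.m$, $(j+2,j+1)$ for $-f.m$; $\rho_j(\#\#l)=\mathsf{addfield}(s_j,\mathsf{ajmp});\mathsf{setfield}(s_j,\mathsf{ajmp},s_l)$ if $1\le l\le k$, and $\rho_j(\#\#l)=\mathsf{addfield}(s_j,\mathsf{stop})$ otherwise. Interpreter. $I=(+\mathsf{hasfield}(s,\mathsf{stop});!;+\mathsf{hasfield}(s,\mathsf{ajmp});\#9;\mathsf{getfield}(u,s,\mathsf{focus});\mathsf{getfield}(v,s,\mathsf{method});+\mathsf{genact}(u,v);\#3;\mathsf{getfield}(s,s,\mathsf{neg});\#4;\mathsf{getfield}(s,s,\mathsf{pos});\#2;\mathsf{getfield}(s,s,\mathsf{ajmp}))^\omega$,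 all instructions with focus $\mathsf{md}$. *)

From HB Require Import structures.
From mathcomp Require Import all_boot all_order.
From mathcomp Require Import finmap.
From Stdlib Require Import ClassicalEpsilon.

Set Implicit Arguments.
Unset Strict Implicit.
Unset Printing Implicit Defensive.


(* A thread over basic actions A is represented coinductively; tau is  *)
(* a separate constructor since  x <| tau |> y = tau o x.              *)
(* Equality of threads = equality of all projections.                  *)

CoInductive thread (A : Type) : Type :=
| TS : thread A
| TD : thread A
| TTau : thread A -> thread A
| TPost : thread A -> A -> thread A -> thread A.
Arguments TS {A}. Arguments TD {A}.

Inductive fthread (A : Type) : Type :=
| FS : fthread A
| FD : fthread A
| FTau : fthread A -> fthread A
| FPost : fthread A -> A -> fthread A -> fthread A.
Arguments FS {A}. Arguments FD {A}.

Fixpoint proj (A : Type) (n : nat) (p : thread A) : fthread A :=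
  match n with
  | 0 => FD
  | n'.+1 =>
    match p with
    | TS => FS
    | TD => FD
    | TTau x => FTau (proj n' x)
    | TPost x a y => FPost (proj n' x) a (proj n' y)
    end
  end.

Definition thr_eq (A : Type) (p q : thread A) : Prop :=
  forall n, proj n p = proj n q.

Definition is_tau (A : Type) (p : thread A) : bool :=
  if p is TTau _ then true else false.

Fixpoint tau_strip (A : Type) (n : nat) (p : thread A) : thread A :=
  match n with
  | 0 => p
  | n'.+1 => if p is TTau x then tau_strip n' x else p
  end.

Definition finite_tau_prefix (A : Type) (p : thread A) : Prop :=
  exists n, ~~ is_tau (tau_strip n p).

Definition strip_all (A : Type) (p : thread A) : option (thread A) :=
  match excluded_middle_informative (finite_tau_prefix p) with
  | left H => Some (tau_strip (proj1_sig (constructive_indefinite_description _ H)) p)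
  | right _ => None
  end.

CoFixpoint tau_tau (A : Type) (p : thread A) : thread A :=
  match strip_all p with
  | None => TD
  | Some q =>
    match q with
    | TS => TS
    | TD => TD
    | TTau _ => TD (* impossible *)
    | TPost x a y => TPost (tau_tau x) a (tau_tau y)
    end
  end.

(* PGA: instruction sequences  prefix ; period^omega                    *)
(* (period = [::] means the finite program prefix).                     *)

Inductive pga_instr (A : Type) : Type :=
| IBas : A -> pga_instr A
| IPos : A -> pga_instr A
| INeg : A -> pga_instr A
| IJump : nat -> pga_instr A
| ITerm : pga_instr A.
Arguments ITerm {A}. Arguments IJump {A}.

Record pga (A : Type) := PGA { pga_prefix : seq (pga_instr A);
                               pga_period : seq (pga_instr A) }.

Definition omega (A : Type) (Y : seq (pga_instr A)) : pga A := PGA [::] Y.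

(* instruction at (1-based) position i, None if beyond the length *)
Definition instr_at (A : Type) (X : pga A) (i : nat) : option (pga_instr A) :=
  if i == 0 then None else
  let k := i.-1 in
  if k < size (pga_prefix X) then onth (pga_prefix X) k
  else if pga_period X is [::] then None
  else onth (pga_period X) ((k - size (pga_prefix X)) %% size (pga_period X)).

Definition jnext (A : Type) (X : pga A) (i : nat) : option nat :=
  match instr_at X i with
  | Some (IJump l) => if 0 < l then Some (i + l) else None
  | _ => None
  end.

Fixpoint jiter (A : Type) (X : pga A) (n i : nat) : nat :=
  match n with
  | 0 => i
  | n'.+1 => if jnext X i is Some j then jiter X n' j else i
  end.

Definition chain_ends_at (A : Type) (X : pga A) (i j : nat) : Prop :=
  exists n, jiter X n i = j /\ jnext X j = None.

Definition chain_end (A : Type) (X : pga A) (i : nat) : option nat :=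
  match excluded_middle_informative (exists j, chain_ends_at X i j) with
  | left H => Some (proj1_sig (constructive_indefinite_description _ H))
  | right _ => None
  end.

CoFixpoint pga_T (A : Type) (X : pga A) (i : nat) : thread A :=
  match chain_end X i with
  | None => TD
  | Some j =>
    match instr_at X j with
    | None => TD
    | Some (IBas a) => TPost (pga_T X j.+1) a (pga_T X j.+1)
    | Some (IPos a) => TPost (pga_T X j.+1) a (pga_T X j.+2)
    | Some (INeg a) => TPost (pga_T X j.+2) a (pga_T X j.+1)
    | Some (IJump _) => TD (* only #0 can occur here *)
    | Some ITerm => TS
    end
  end.

Definition pga_beh (A : Type) (X : pga A) : thread A := pga_T X 1.

Section MD.
Local Open Scope fset_scope.
Local Open Scope fmap_scope.
Context {d : Order.disp_t} {Spot : finOrderType d} {Field : finType}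
        {PAtom : choiceType}.

Inductive mdm : Type :=
| create of Spot
| setspot of Spot & Spot
| clearspot of Spot
| equal of Spot & Spot
| undef of Spot
| addfield of Spot & Field
| rmvfield of Spot & Field
| hasfield of Spot & Field
| setfield of Spot & Field & Spot
| getfield of Spot & Spot & Field
| genact of Spot & Spot.

(* basic actions: f.m (f, m spots naming a focus and a method), and md.m *)
Inductive bact : Type :=
| Bas of Spot & Spot
| MD of mdm.

(* a proper state <sigma, alpha>; alpha is a finite map from atoms to
   finite maps from fields to PAtom + bot (None = bot) *)
Record mdstate := MDState {
  sigma : Spot -> option PAtom;
  alpha : {fmap PAtom -> {fmap Field -> option PAtom}} }.

(* a state: None = the error state "up", Some st = <sigma, alpha> *)
Definition mstate := option mdstate.

Inductive yield : Type := YT | YF | YM of Spot & Spot | YB.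

Definition upd_sigma (sg : Spot -> option PAtom) (x : Spot) (c : option PAtom) :=
  fun y => if y == x then c else sg y.

Definition fields_of (st : mdstate) (x : Spot) : option {fmap Field -> option PAtom} :=
  match sigma st x with
  | None => None
  | Some a => Some (odflt [fmap] (alpha st).[? a])
  end.

Definition is_field (st : mdstate) (x : Spot) (w : Field) : bool :=
  if fields_of st x is Some fl then w \in domf fl else false.

Variables (Foci Meth : {set Spot}) (proatom : nat -> PAtom) (atomno : PAtom -> nat).

Definition md_step (m : mdm) (t : mstate) : mstate * yield :=
  match t with
  | None => (None, YB)
  | Some st =>
    let sg := sigma st in let al := alpha st in
    match m with
    | create x =>
        let n := \max_(b <- domf al) atomno b in
        let a := proatom n.+1 in
        (Some (MDState (upd_sigma sg x (Some a)) al.[a <- [fmap]]), YT)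
    | setspot x x' => (Some (MDState (upd_sigma sg x (sg x')) al), YT)
    | clearspot x => (Some (MDState (upd_sigma sg x None) al), YT)
    | equal x x' => (t, if sg x == sg x' then YT else YF)
    | undef x => (t, if sg x == None then YT else YF)
    | addfield x w =>
        match sg x with
        | Some a =>
          if is_field st x w then (t, YF)
          else (Some (MDState sg al.[a <- (odflt [fmap] al.[? a]).[w <- None]]), YT)
        | None => (t, YF)
        end
    | rmvfield x w =>
        match sg x with
        | Some a =>
          if is_field st x w then
            (Some (MDState sg al.[a <- (odflt [fmap] al.[? a]).[~ w]]), YT)
          else (t, YF)
        | None => (t, YF)
        end
    | hasfield x w => (t, if is_field st x w then YT else YF)
    | setfield x w x' =>
        match sg x with
        | Some a =>
          if is_field st x w then
            (Some (MDState sg al.[a <- (odflt [fmap] al.[? a]).[w <- sg x']]), YT)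
          else (t, YF)
        | None => (t, YF)
        end
    | getfield x x' w =>
        match fields_of st x' with
        | Some fl =>
          if fl.[? w] is Some c then (Some (MDState (upd_sigma sg x c) al), YT)
          else (t, YF)
        | None => (t, YF)
        end
    | genact x x' =>
        if (sg x != None) && (sg x' != None) then
          match [pick f | [&& f \in Foci, sg f == sg x &
                     [forall g, ((g \in Foci) && (sg g == sg x)) ==> (f <= g)%O]]],
                [pick m' | [&& m' \in Meth, sg m' == sg x' &
                     [forall g, ((g \in Meth) && (sg g == sg x')) ==> (m' <= g)%O]]] with
          | Some f, Some m' => (t, YM f m')
          | _, _ => (None, YB)
          end
        else (None, YB)
    end
  end.

Definition eff (m : mdm) (t : mstate) : mstate := (md_step m t).1.
Definition yld (m : mdm) (t : mstate) : yield := (md_step m t).2.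

CoFixpoint use (p : thread bact) (t : mstate) : thread bact :=
  match p with
  | TS => TS
  | TD => TD
  | TTau x => TTau (use x t)
  | TPost x (Bas f m) y => TPost (use x t) (Bas f m) (use y t)
  | TPost x (MD m) y =>
      match md_step m t with
      | (t', YT) => TTau (use x t')
      | (t', YF) => TTau (use y t')
      | (t', YM f m') => TPost (use x t') (Bas f m') (use y t')
      | (_, YB) => TD
      end
  end.

Definition t_init : mstate := Some (MDState (fun _ => None) [fmap]).

Fixpoint exec_md (X : seq (pga_instr bact)) (t : mstate) : mstate :=
  match X with
  | [::] => t
  | IBas (MD m) :: X' => exec_md X' (eff m t)
  | _ :: X' => exec_md X' t
  end.

End MD.

Section PGLD.
Context {d : Order.disp_t} {Spot : finOrderType d} {Field : finType}.

Local Notation bact := (@bact d Spot Field).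

Inductive pgld_instr : Type :=
| LBas of Spot & Spot
| LPos of Spot & Spot
| LNeg of Spot & Spot
| LAJump of nat.

Definition psi (k j : nat) (w : pgld_instr) : pga_instr bact :=
  match w with
  | LBas f m => IBas (Bas f m)
  | LPos f m => IPos (Bas f m)
  | LNeg f m => INeg (Bas f m)
  | LAJump l =>
      if (l == 0) || (k < l) then ITerm
      else if j <= l then IJump (l - j)
      else IJump (k + 2 - (j - l))
  end.

Definition pgld_beh (P : seq pgld_instr) : thread bact :=
  pga_beh (omega ([seq psi (size P) j.+1 (nth (LAJump 0) P j) | j <- iota 0 (size P)]
                  ++ [:: ITerm; ITerm])).

Definition instr_fm (w : pgld_instr) : option (Spot * Spot) :=
  match w with
  | LBas f m | LPos f m | LNeg f m => Some (f, m)
  | LAJump _ => None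
  end.

(* foci / methods occurring in P (with repetitions) *)
Definition occ_foci (P : seq pgld_instr) : seq Spot := pmap (omap fst \o instr_fm) P.
Definition occ_meths (P : seq pgld_instr) : seq Spot := pmap (omap snd \o instr_fm) P.

Variables (fstop fajmp ffocus fmethod fpos fneg : Field).
Variables (s : Spot) (sj : nat -> Spot).

Definition mdi (m : @mdm d Spot Field) : pga_instr bact := IBas (MD m).

Definition rho (k j : nat) (w : pgld_instr) : seq (pga_instr bact) :=
  let rf f m p q :=
    [:: mdi (addfield (sj j) ffocus); mdi (addfield (sj j) fmethod);
        mdi (addfield (sj j) fpos); mdi (addfield (sj j) fneg);
        mdi (setfield (sj j) ffocus f); mdi (setfield (sj j) fmethod m);
        mdi (setfield (sj j) fpos (sj p)); mdi (setfield (sj j) fneg (sj q))] in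
  match w with
  | LBas f m => rf f m j.+1 j.+1
  | LPos f m => rf f m j.+1 j.+2
  | LNeg f m => rf f m j.+2 j.+1
  | LAJump l =>
      if (1 <= l) && (l <= k) then
        [:: mdi (addfield (sj j) fajmp); mdi (setfield (sj j) fajmp (sj l))]
      else [:: mdi (addfield (sj j) fstop)]
  end.

(* pgldmd(P), given enumerations fs, ms of the distinct occurring foci
   and methods *)
Definition pgldmd (fs ms : seq Spot) (P : seq pgld_instr) : seq (pga_instr bact) :=
  let k := size P in
  [seq mdi (create f) | f <- fs] ++ [seq mdi (create m) | m <- ms]
  ++ [seq mdi (create (sj j)) | j <- iota 1 (k + 2)]
  ++ flatten [seq rho k j.+1 (nth (LAJump 0) P j) | j <- iota 0 k]
  ++ [:: mdi (addfield (sj k.+1) fstop); mdi (addfield (sj k.+2) fstop);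
         mdi (setspot s (sj 1)); ITerm].

End PGLD.

Section Interp.
Context {d : Order.disp_t} {Spot : finOrderType d} {Field : finType}.
Variables (fstop fajmp ffocus fmethod fpos fneg : Field) (s u v : Spot).

Definition interp_body : seq (pga_instr (@bact d Spot Field)) :=
  [:: IPos (MD (hasfield s fstop)); ITerm; IPos (MD (hasfield s fajmp)); IJump 9;
      IBas (MD (getfield u s ffocus)); IBas (MD (getfield v s fmethod));
      IPos (MD (genact u v)); IJump 3; IBas (MD (getfield s s fneg)); IJump 4;
      IBas (MD (getfield s s fpos)); IJump 2; IBas (MD (getfield s s fajmp))].

Definition interp : pga (@bact d Spot Field) := omega interp_body.
End Interp.

From Pilot Require Import Defs.
From HB Require Import structures.
From mathcomp Require Import all_boot all_order.
From mathcomp Require Import finmap.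
From Stdlib Require Import ClassicalEpsilon Classical.
From mathcomp Require Import zify.

Set Implicit Arguments.
Unset Strict Implicit.
Unset Printing Implicit Defensive.

(* After pgldmd(P), the spots s_1, ..., s_(k+2) hold pairwise distinct atoms and
   the fields of the atom of s_j describe u_j: focus, method and the atoms of its
   two successors for a test, the atom of the target for an absolute jump ##l with
   1 <= l <= k, and a [stop] field otherwise; s points to the atom of s_1.  One
   cycle of the interpreter I, started with s at the atom of s_j, therefore stops,
   moves s to the target of the jump by three silent steps, or performs f.m and
   moves s to the positive or negative successor, all other steps being silent.
   After abstraction from tau this is exactly what the PGA translation of P does
   at position j, so both threads have the same projections, by induction on the
   depth.  The only subtlety is a chain of absolute jumps: it either reaches a
   non-jump instruction, or loops forever, and then both sides are D (an infinite
   jump chain in PGA, an infinite tau prefix on the interpreter side). *)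

(** * Threads *)

Definition frob (A : Type) (p : thread A) : thread A :=
  match p with TS => TS | TD => TD | TTau x => TTau x | TPost x a y => TPost x a y end.

Lemma frobE (A : Type) (p : thread A) : p = frob p.
Proof. by case: p. Qed.

Section TauAbstraction.
Variable A : Type.
Implicit Types p : thread A.

Lemma tau_strip_nontau n p : ~~ is_tau p -> tau_strip n p = p.
Proof. by case: n => //= n; case: p. Qed.

Lemma tau_strip_uniq n m p :
  ~~ is_tau (tau_strip n p) -> ~~ is_tau (tau_strip m p) -> tau_strip n p = tau_strip m p.
Proof.
elim: n m p => [|n IH] m p /=; first by move=> H _; rewrite tau_strip_nontau.
case: p => [| |x|x a y] //=; try by move=> H _; rewrite tau_strip_nontau.
by case: m => [|m] //=; apply: IH.
Qed.

Lemma strip_all_tau p : strip_all (TTau p) = strip_all p.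
Proof.
rewrite /strip_all.
case: excluded_middle_informative => H1; case: excluded_middle_informative => H2 //.
- case: constructive_indefinite_description => n1 Hn1.
  case: constructive_indefinite_description => n2 Hn2 /=.
  by case: n1 Hn1 => [|n1] //= Hn1; congr Some; apply: tau_strip_uniq.
- by case: H2; case: H1 => [[|n] Hn] //; exists n.
- by case: H1; case: H2 => n Hn; exists n.+1.
Qed.

Lemma strip_all_nontau p : ~~ is_tau p -> strip_all p = Some p.
Proof.
move=> Hp; rewrite /strip_all; case: excluded_middle_informative => [H|[]]; last by exists 0.
by case: constructive_indefinite_description => n Hn /=; rewrite tau_strip_nontau.
Qed.

Lemma tau_tauE p : tau_tau p =
  match strip_all p with
  | Some TS => TS
  | Some (TPost x a y) => TPost (tau_tau x) a (tau_tau y)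
  | _ => TD
  end.
Proof. by rewrite [LHS]frobE /=; case: strip_all => [[]|]. Qed.

Lemma tau_tau_tau p : tau_tau (TTau p) = tau_tau p.
Proof. by rewrite !tau_tauE strip_all_tau. Qed.

Lemma tau_tau_S : tau_tau (@TS A) = TS.
Proof. by rewrite tau_tauE strip_all_nontau. Qed.

Lemma tau_tau_post (x : thread A) a y : tau_tau (TPost x a y) = TPost (tau_tau x) a (tau_tau y).
Proof. by rewrite tau_tauE strip_all_nontau. Qed.

Lemma tau_tau_taus p : (forall n, is_tau (tau_strip n p)) -> tau_tau p = TD.
Proof.
move=> H; rewrite tau_tauE /strip_all; case: excluded_middle_informative => [E|//].
by exfalso; case: E => n; rewrite H.
Qed.

End TauAbstraction.

(** * PGA *)

Section JumpChains.
Variables (A : Type) (X : pga A).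

Lemma jiter_stop n i : jnext X i = None -> jiter X n i = i.
Proof. by case: n => //= n ->. Qed.

Lemma jiterD n m i : jiter X (n + m) i = jiter X m (jiter X n i).
Proof.
elim: n i => [|n IH] i //=.
by case E: (jnext X i) => [j|]; [apply: IH | rewrite jiter_stop].
Qed.

Lemma chain_ends_at_uniq i j1 j2 :
  chain_ends_at X i j1 -> chain_ends_at X i j2 -> j1 = j2.
Proof.
move=> [n1 [E1 N1]] [n2 [E2 N2]].
wlog le12 : n1 n2 j1 j2 E1 N1 E2 N2 / n1 <= n2.
  by move=> W; case: (leqP n1 n2) => h; [apply: (W n1 n2) | apply/esym/(W n2 n1); rewrite // ltnW].
by rewrite -E2 -(subnKC le12) jiterD E1 jiter_stop.
Qed.

Lemma chain_ends_at_step i i' j :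
  jnext X i = Some i' -> chain_ends_at X i j <-> chain_ends_at X i' j.
Proof.
move=> H; split; last by case=> n [E N]; exists n.+1 => /=; rewrite H.
case=> [[|n] [E N]] /=; first by move: N; rewrite -E H.
by move: E; rewrite /= H => E; exists n.
Qed.

Lemma chain_end_here i : jnext X i = None -> chain_end X i = Some i.
Proof.
move=> H; rewrite /chain_end; case: excluded_middle_informative => [E|[]]; last by exists i, 0.
case: constructive_indefinite_description => j Hj /=.
by congr Some; apply: (chain_ends_at_uniq Hj); exists 0.
Qed.

Lemma chain_end_step i i' : jnext X i = Some i' -> chain_end X i = chain_end X i'.
Proof.
move=> H; rewrite /chain_end.
case: excluded_middle_informative => H1; case: excluded_middle_informative => H2 //.
- case: constructive_indefinite_description => j1 Hj1.
  case: constructive_indefinite_description => j2 Hj2 /=.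
  by congr Some; apply: (chain_ends_at_uniq Hj1); apply/(chain_ends_at_step _ H).
- by case: H2; case: H1 => j /(chain_ends_at_step _ H); exists j.
- by case: H1; case: H2 => j /(chain_ends_at_step _ H); exists j.
Qed.

Lemma pga_TE i : pga_T X i =
  match chain_end X i with
  | None => TD
  | Some j =>
    match instr_at X j with
    | Some (IBas a) => TPost (pga_T X j.+1) a (pga_T X j.+1)
    | Some (IPos a) => TPost (pga_T X j.+1) a (pga_T X j.+2)
    | Some (INeg a) => TPost (pga_T X j.+2) a (pga_T X j.+1)
    | Some ITerm => TS
    | _ => TD
    end
  end.
Proof. by rewrite [LHS]frobE /=; case: chain_end => [j|] //; case: instr_at => [[]|]. Qed.

Lemma pga_T_nonjump i :
  (forall l, instr_at X i <> Some (IJump l)) ->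
  pga_T X i = match instr_at X i with
              | Some (IBas a) => TPost (pga_T X i.+1) a (pga_T X i.+1)
              | Some (IPos a) => TPost (pga_T X i.+1) a (pga_T X i.+2)
              | Some (INeg a) => TPost (pga_T X i.+2) a (pga_T X i.+1)
              | Some ITerm => TS
              | _ => TD
              end.
Proof.
move=> H; rewrite pga_TE chain_end_here // /jnext.
by case: instr_at H => [[]|] // l /(_ l).
Qed.

Lemma pga_T_bas i a : instr_at X i = Some (IBas a) ->
  pga_T X i = TPost (pga_T X i.+1) a (pga_T X i.+1).
Proof. by move=> H; rewrite pga_T_nonjump H. Qed.

Lemma pga_T_pos i a : instr_at X i = Some (IPos a) ->
  pga_T X i = TPost (pga_T X i.+1) a (pga_T X i.+2).
Proof. by move=> H; rewrite pga_T_nonjump H. Qed.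

Lemma pga_T_neg i a : instr_at X i = Some (INeg a) ->
  pga_T X i = TPost (pga_T X i.+2) a (pga_T X i.+1).
Proof. by move=> H; rewrite pga_T_nonjump H. Qed.

Lemma pga_T_term i : instr_at X i = Some ITerm -> pga_T X i = TS.
Proof. by move=> H; rewrite pga_T_nonjump H. Qed.

Lemma pga_T_jump i l : instr_at X i = Some (IJump l) -> 0 < l -> pga_T X i = pga_T X (i + l).
Proof. by move=> H l0; rewrite !pga_TE (@chain_end_step i (i + l)) // /jnext H l0. Qed.

Lemma pga_T_jumps_forever i :
  (forall n, exists l, instr_at X (jiter X n i) = Some (IJump l)) -> pga_T X i = TD.
Proof.
move=> H; rewrite pga_TE /chain_end; case: excluded_middle_informative => // E.
case: constructive_indefinite_description => j [n [Ej _]] /=.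
by have [l] := H n; rewrite Ej => ->.
Qed.

End JumpChains.

Lemma instr_at_omega (A : Type) (Y : seq (pga_instr A)) r c :
  0 < r <= size Y -> instr_at (omega Y) (r + size Y * c) = onth Y r.-1.
Proof.
case/andP=> r0 rY; rewrite /instr_at /=.
have -> : (r + size Y * c == 0) = false by case: r r0 {rY}.
case: Y rY => [|y Y] rY; first by case: r r0 rY.
have -> : (r + (size Y).+1 * c).-1 - 0 = r.-1 + (size Y).+1 * c by lia.
by rewrite addnC mulnC modnMDl modn_small //=; rewrite /= in rY; lia.
Qed.

(** * The molecular dynamics service *)

Section MDService.
Local Open Scope fset_scope.
Local Open Scope fmap_scope.
Context {d : Order.disp_t} {Spot : finOrderType d} {Field : finType} {PAtom : choiceType}.
Context {Foci Meth : {set Spot}} {proatom : nat -> PAtom} {atomno : PAtom -> nat}.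

Local Notation use := (@use d Spot Field PAtom Foci Meth proatom atomno).
Local Notation md_step := (@md_step d Spot Field PAtom Foci Meth proatom atomno).
Local Notation eff := (@eff d Spot Field PAtom Foci Meth proatom atomno).
Local Notation exec := (@exec_md d Spot Field PAtom Foci Meth proatom atomno).
Local Notation bact := (@bact d Spot Field).
Implicit Types (sg : Spot -> option PAtom) (al : {fmap PAtom -> {fmap Field -> option PAtom}}).

Lemma use_S t : use TS t = TS.
Proof. by rewrite [LHS]frobE. Qed.

Lemma use_md x m y t : use (TPost x (MD m) y) t =
  match md_step m t with
  | (t', YT) => TTau (use x t')
  | (t', YF) => TTau (use y t')
  | (t', YM f m') => TPost (use x t') (Bas f m') (use y t')
  | (_, YB) => TD
  end.
Proof. by rewrite [LHS]frobE /=; case: md_step => ? []. Qed.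

Lemma exec_cat X Y t : exec (X ++ Y) t = exec Y (exec X t).
Proof. by elim: X t => [|[[|m]|m|m|l|] X IH] t //=. Qed.

Lemma eff_addfield sg al x a w : sg x = Some a -> w \notin domf (odflt [fmap] al.[? a]) ->
  eff (addfield x w) (Some (MDState sg al)) =
  Some (MDState sg al.[a <- (odflt [fmap] al.[? a]).[w <- None]]).
Proof. by move=> Ex Hw; rewrite /Defs.eff /= Ex /is_field /fields_of /= Ex (negbTE Hw). Qed.

Lemma eff_setfield sg al x a w x' : sg x = Some a -> w \in domf (odflt [fmap] al.[? a]) ->
  eff (setfield x w x') (Some (MDState sg al)) =
  Some (MDState sg al.[a <- (odflt [fmap] al.[? a]).[w <- sg x']]).
Proof. by move=> Ex Hw; rewrite /Defs.eff /= Ex /is_field /fields_of /= Ex Hw. Qed.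

Hypothesis atomno_proatom : forall n, 0 < n -> atomno (proatom n) = n.

Lemma fresh_atom al : proatom (\max_(b <- domf al) atomno b).+1 \notin domf al.
Proof.
apply/negP => H.
have := @leq_bigmax_seq _ (domf al : seq PAtom) xpredT atomno _ H erefl.
by rewrite atomno_proatom // ltnn.
Qed.

(* Each [create] allocates an atom fresh for the current state; hence injectivity. *)
Lemma exec_creates xs sg al :
  exists sg' al', exec [seq mdi (create x) | x <- xs] (Some (MDState sg al))
                    = Some (MDState sg' al')
   /\ (forall y, y \notin xs -> sg' y = sg y)
   /\ (forall x, x \in xs -> exists2 b, sg' x = Some b &
                               b \notin domf al /\ al'.[? b] = Some [fmap])
   /\ {in xs &, injective sg'}
   /\ (forall c, c \in domf al -> al'.[? c] = al.[? c]).
Proof.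
elim: xs sg al => [|x xs IH] sg al /=; first by exists sg, al.
rewrite /Defs.eff /=; set a := proatom _; have aN : a \notin domf al by apply: fresh_atom.
have [sg' [al' [E [Hout [Hin [Hinj Hold]]]]]] :=
  IH (upd_sigma sg x (Some a)) al.[a <- [fmap]].
have new_atom y : y \in xs -> sg' y <> Some a.
  by move=> /Hin [b -> [bN _]] [ba]; move: bN; rewrite ba dom_setf !inE eqxx.
have old_x y : y \in x :: xs -> y \notin xs -> sg' y = Some a.
  by rewrite inE => /orP [/eqP -> xN | -> //]; rewrite Hout // /upd_sigma eqxx.
have Ea : al'.[? a] = Some [fmap] by rewrite Hold ?fnd_set ?eqxx // dom_setf !inE eqxx.
exists sg', al'; split=> //; split.
  by move=> y; rewrite inE negb_or => /andP [yx yxs]; rewrite Hout // /upd_sigma (negbTE yx).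
split.
  move=> y yX; case: (boolP (y \in xs)) => [/Hin [b Eb [bN Eb']] | yN]; last first.
    by exists a; rewrite ?old_x.
  by exists b => //; split=> //; move: bN; rewrite dom_setf !inE negb_or => /andP [].
split.
  move=> y1 y2 H1 H2; case: (boolP (y1 \in xs)) => X1; case: (boolP (y2 \in xs)) => X2.
  - exact: Hinj.
  - by rewrite (old_x y2) //; move/new_atom.
  - by rewrite (old_x y1) // => /esym; move/new_atom.
  - by move: H1 H2; rewrite !inE (negbTE X1) (negbTE X2) !orbF => /eqP -> /eqP ->.
move=> c cal; rewrite Hold ?dom_setf ?inE ?cal ?orbT // fnd_set.
by case: eqP => // ca; move: aN; rewrite -ca cal.
Qed.

Lemma setf_setf (K : choiceType) V (f : {fmap K -> V}) k v v' :
  f.[k <- v].[k <- v'] = f.[k <- v'].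
Proof. by rewrite setfC eqxx. Qed.

Variables (fstop fajmp ffocus fmethod fpos fneg : Field).
Hypothesis fields_uniq : uniq [:: fstop; fajmp; ffocus; fmethod; fpos; fneg].

Lemma field_neqE :
  ((fstop == fajmp) = false) * ((fstop == ffocus) = false) * ((fstop == fmethod) = false) *
  ((fstop == fpos) = false) * ((fstop == fneg) = false) * ((fajmp == ffocus) = false) *
  ((fajmp == fmethod) = false) * ((fajmp == fpos) = false) * ((fajmp == fneg) = false) *
  ((ffocus == fmethod) = false) * ((ffocus == fpos) = false) * ((ffocus == fneg) = false) *
  ((fmethod == fpos) = false) * ((fmethod == fneg) = false) * ((fpos == fneg) = false) *
  ((fajmp == fstop) = false) * ((ffocus == fstop) = false) * ((fmethod == fstop) = false) *
  ((fpos == fstop) = false) * ((fneg == fstop) = false) * ((ffocus == fajmp) = false) *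
  ((fmethod == fajmp) = false) * ((fpos == fajmp) = false) * ((fneg == fajmp) = false) *
  ((fmethod == ffocus) = false) * ((fpos == ffocus) = false) * ((fneg == ffocus) = false) *
  ((fpos == fmethod) = false) * ((fneg == fmethod) = false) * ((fneg == fpos) = false).
Proof.
by repeat split; apply/negbTE/eqP => E; move: fields_uniq; rewrite E /= !inE !eqxx ?orbT ?andbF.
Qed.

Definition test_code (x f m xp xq : Spot) : seq (pga_instr bact) :=
  [:: mdi (addfield x ffocus); mdi (addfield x fmethod);
      mdi (addfield x fpos); mdi (addfield x fneg);
      mdi (setfield x ffocus f); mdi (setfield x fmethod m);
      mdi (setfield x fpos xp); mdi (setfield x fneg xq)].

Definition test_fields sg f m xp xq : {fmap Field -> option PAtom} :=
  [fmap].[ffocus <- sg f].[fmethod <- sg m].[fpos <- sg xp].[fneg <- sg xq].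

Lemma exec_test_code sg al x a f m xp xq : sg x = Some a -> al.[? a] = Some [fmap] ->
  exec (test_code x f m xp xq) (Some (MDState sg al))
  = Some (MDState sg al.[a <- test_fields sg f m xp xq]).
Proof.
move=> Ex Ea; rewrite /=.
do 4 (rewrite (eff_addfield Ex); last by rewrite ?fnd_set ?eqxx Ea /= ?inE ?field_neqE).
do 4 (rewrite (eff_setfield _ Ex); last by rewrite ?fnd_set ?eqxx Ea /= ?inE ?eqxx ?orbT).
rewrite !fnd_set !eqxx Ea /= !setf_setf.
congr (Some (MDState sg al.[a <- _])); apply/fmapP => w; rewrite !fnd_set fnd_fmap0.
by do 4 case: eqP => //.
Qed.

Lemma test_fieldsE sg f m xp xq (fl := test_fields sg f m xp xq) :
  [/\ fstop \notin domf fl, fajmp \notin domf fl,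
      fl.[? ffocus] = Some (sg f), fl.[? fmethod] = Some (sg m)
    & fl.[? fpos] = Some (sg xp) /\ fl.[? fneg] = Some (sg xq)].
Proof.
rewrite /fl /test_fields !fnd_set !field_neqE !eqxx.
by split; rewrite // !dom_setf !inE !field_neqE.
Qed.

End MDService.

(** * The interpreter *)

Section Interpreter.
Local Open Scope fmap_scope.
Context {d : Order.disp_t} {Spot : finOrderType d} {Field : finType} {PAtom : choiceType}.
Context {Foci Meth : {set Spot}} {proatom : nat -> PAtom} {atomno : PAtom -> nat}.
Context {fstop fajmp ffocus fmethod fpos fneg : Field} {s u v : Spot}.

Local Notation use := (@use d Spot Field PAtom Foci Meth proatom atomno).
Local Notation md_step := (@md_step d Spot Field PAtom Foci Meth proatom atomno).
Local Notation IX := (interp fstop fajmp ffocus fmethod fpos fneg s u v).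
Local Notation IT := (pga_T IX).
Implicit Types (sg : Spot -> option PAtom) (al : {fmap PAtom -> {fmap Field -> option PAtom}}).

Lemma interp_instr r c : 0 < r <= 13 ->
  instr_at IX (r + 13 * c) = onth (interp_body fstop fajmp ffocus fmethod fpos fneg s u v) r.-1.
Proof. exact: (@instr_at_omega _ (interp_body fstop fajmp ffocus fmethod fpos fneg s u v)). Qed.

Lemma IT1 c : IT (1 + 13 * c) = TPost (IT (2 + 13 * c)) (MD (hasfield s fstop)) (IT (3 + 13 * c)).
Proof. by rewrite (pga_T_pos (a := MD (hasfield s fstop))) // interp_instr. Qed.
Lemma IT2 c : IT (2 + 13 * c) = TS.
Proof. by rewrite pga_T_term // interp_instr. Qed.
Lemma IT3 c : IT (3 + 13 * c) = TPost (IT (4 + 13 * c)) (MD (hasfield s fajmp)) (IT (5 + 13 * c)).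
Proof. by rewrite (pga_T_pos (a := MD (hasfield s fajmp))) // interp_instr. Qed.
Lemma IT4 c : IT (4 + 13 * c) = IT (13 + 13 * c).
Proof. by rewrite (pga_T_jump (l := 9)) ?interp_instr // addnAC. Qed.
Lemma IT5 c : IT (5 + 13 * c) = TPost (IT (6 + 13 * c)) (MD (getfield u s ffocus)) (IT (6 + 13 * c)).
Proof. by rewrite (pga_T_bas (a := MD (getfield u s ffocus))) // interp_instr. Qed.
Lemma IT6 c : IT (6 + 13 * c) = TPost (IT (7 + 13 * c)) (MD (getfield v s fmethod)) (IT (7 + 13 * c)).
Proof. by rewrite (pga_T_bas (a := MD (getfield v s fmethod))) // interp_instr. Qed.
Lemma IT7 c : IT (7 + 13 * c) = TPost (IT (8 + 13 * c)) (MD (genact u v)) (IT (9 + 13 * c)).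
Proof. by rewrite (pga_T_pos (a := MD (genact u v))) // interp_instr. Qed.
Lemma IT8 c : IT (8 + 13 * c) = IT (11 + 13 * c).
Proof. by rewrite (pga_T_jump (l := 3)) ?interp_instr // addnAC. Qed.
Lemma IT9 c : IT (9 + 13 * c) = TPost (IT (10 + 13 * c)) (MD (getfield s s fneg)) (IT (10 + 13 * c)).
Proof. by rewrite (pga_T_bas (a := MD (getfield s s fneg))) // interp_instr. Qed.
Lemma IT10 c : IT (10 + 13 * c) = IT (1 + 13 * c.+1).
Proof. by rewrite (pga_T_jump (l := 4)) ?interp_instr //; congr IT; lia. Qed.
Lemma IT11 c : IT (11 + 13 * c) = TPost (IT (12 + 13 * c)) (MD (getfield s s fpos)) (IT (12 + 13 * c)).
Proof. by rewrite (pga_T_bas (a := MD (getfield s s fpos))) // interp_instr. Qed.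
Lemma IT12 c : IT (12 + 13 * c) = IT (1 + 13 * c.+1).
Proof. by rewrite (pga_T_jump (l := 2)) ?interp_instr //; congr IT; lia. Qed.
Lemma IT13 c : IT (13 + 13 * c) =
  TPost (IT (1 + 13 * c.+1)) (MD (getfield s s fajmp)) (IT (1 + 13 * c.+1)).
Proof.
by rewrite (pga_T_bas (a := MD (getfield s s fajmp))) ?interp_instr //; congr TPost; congr IT; lia.
Qed.

Section Cycle.
Variables (sg : Spot -> option PAtom) (al : {fmap PAtom -> {fmap Field -> option PAtom}}).
Variables (a : PAtom) (fl : {fmap Field -> option PAtom}).
Hypotheses (sg_s : sg s = Some a) (al_a : al.[? a] = Some fl).

Lemma hasfield_step sg' w : sg' s = sg s ->
  md_step (hasfield s w) (Some (MDState sg' al)) =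
  (Some (MDState sg' al), if w \in domf fl then YT else YF).
Proof. by move=> E; rewrite /= /is_field /fields_of /= E sg_s al_a. Qed.

Lemma getfield_step sg' x w c : fl.[? w] = Some c -> sg' s = sg s ->
  md_step (getfield x s w) (Some (MDState sg' al)) = (Some (MDState (upd_sigma sg' x c) al), YT).
Proof. by move=> Ec E; rewrite /= /fields_of /= E sg_s al_a /= Ec. Qed.

Lemma interp_stop c : fstop \in domf fl -> use (IT (1 + 13 * c)) (Some (MDState sg al)) = TTau TS.
Proof. by move=> H; rewrite IT1 use_md hasfield_step // H IT2 use_S. Qed.

Lemma interp_ajmp c c' : fstop \notin domf fl -> fl.[? fajmp] = Some c' ->
  use (IT (1 + 13 * c)) (Some (MDState sg al)) =
  TTau (TTau (TTau (use (IT (1 + 13 * c.+1)) (Some (MDState (upd_sigma sg s c') al))))).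
Proof.
move=> Hstop Hajmp.
rewrite IT1 use_md hasfield_step // (negbTE Hstop).
rewrite IT3 use_md hasfield_step // -fndSome Hajmp.
by rewrite IT4 IT13 use_md (getfield_step _ Hajmp).
Qed.

Lemma interp_test c cf cm cp cq f m :
  let sg' := upd_sigma (upd_sigma sg u cf) v cm in
  s != u -> s != v -> fstop \notin domf fl -> fajmp \notin domf fl ->
  fl.[? ffocus] = Some cf -> fl.[? fmethod] = Some cm ->
  fl.[? fpos] = Some cp -> fl.[? fneg] = Some cq ->
  md_step (genact u v) (Some (MDState sg' al)) = (Some (MDState sg' al), YM f m) ->
  use (IT (1 + 13 * c)) (Some (MDState sg al)) =
  TTau (TTau (TTau (TTau (TPost
    (TTau (use (IT (1 + 13 * c.+1)) (Some (MDState (upd_sigma sg' s cp) al))))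
    (Bas f m)
    (TTau (use (IT (1 + 13 * c.+1)) (Some (MDState (upd_sigma sg' s cq) al)))))))).
Proof.
move=> sg' su sv Hstop Hajmp Hf Hm Hp Hq Hgen.
have sg'_s : sg' s = sg s by rewrite /sg' /upd_sigma (negbTE su) (negbTE sv).
rewrite IT1 use_md hasfield_step // (negbTE Hstop).
rewrite IT3 use_md hasfield_step // (negbTE Hajmp).
rewrite IT5 use_md (getfield_step _ Hf) // IT6 use_md (getfield_step _ Hm); last first.
  by rewrite /upd_sigma (negbTE su).
rewrite IT7 use_md Hgen IT8 IT11 use_md (getfield_step _ Hp) // IT12.
by rewrite IT9 use_md (getfield_step _ Hq) // IT10.
Qed.

End Cycle.

Lemma genact_least sg al f m :
  f \in Foci -> m \in Meth -> sg u = sg f -> sg v = sg m -> sg f != None -> sg m != None ->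
  (forall g, g \in Foci -> sg g = sg f -> g = f) ->
  (forall g, g \in Meth -> sg g = sg m -> g = m) ->
  md_step (genact u v) (Some (MDState sg al)) = (Some (MDState sg al), YM f m).
Proof.
move=> fF mM Eu Ev fN mN Hf Hm; rewrite /= Eu Ev fN mN /=.
case: pickP => [f' /and3P [F1 /eqP F2 _]|N]; last first.
  have := N f; rewrite fF eqxx /=; move/negP; case; apply/forallP => g.
  by apply/implyP => /andP [gF /eqP /(Hf g gF) ->]; rewrite Order.POrderTheory.lexx.
case: pickP => [m' /and3P [M1 /eqP M2 _]|N]; last first.
  have := N m; rewrite mM eqxx /=; move/negP; case; apply/forallP => g.
  by apply/implyP => /andP [gM /eqP /(Hm g gM) ->]; rewrite Order.POrderTheory.lexx.
by rewrite (Hf f' F1 F2) (Hm m' M1 M2).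
Qed.

End Interpreter.

Lemma uniq_map_inj_in (T1 T2 : eqType) (f : T1 -> T2) s :
  uniq (map f s) -> {in s &, injective f}.
Proof.
elim: s => [|a s IH] //= /andP [fa U] x y; rewrite !inE.
case/orP=> [/eqP ->|xs] /orP [/eqP ->|ys] // E.
- by move: fa; rewrite E map_f.
- by move: fa; rewrite -E map_f.
- exact: IH.
Qed.

Lemma mem_pmap_nth (aT : Type) (rT : eqType) (f : aT -> option rT) (s : seq aT) x0 i y :
  i < size s -> f (nth x0 s i) = Some y -> y \in pmap f s.
Proof.
elim: s i => [|a s IH] [|i] //= Hi E; first by rewrite E inE eqxx.
by case: (f a) => [b|] /=; rewrite ?inE (IH i) ?orbT.
Qed.

Section Simulation.
Local Open Scope fmap_scope.
Variables (d : Order.disp_t) (Spot : finOrderType d) (Foci Meth : {set Spot})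
  (Field : finType) (fstop fajmp ffocus fmethod fpos fneg : Field)
  (PAtom : choiceType) (proatom : nat -> PAtom) (atomno : PAtom -> nat)
  (s u v : Spot) (sj : nat -> Spot) (P : seq (@pgld_instr d Spot)) (fs ms : seq Spot).
Hypothesis fields_uniq : uniq [:: fstop; fajmp; ffocus; fmethod; fpos; fneg].
Hypothesis atomno_proatom : forall n, 0 < n -> atomno (proatom n) = n.
Hypothesis P_fm :
  all (fun w => if instr_fm w is Some (f, m) then (f \in Foci) && (m \in Meth) else true) P.
Hypothesis spots_uniq : uniq (s :: u :: v :: [seq sj j | j <- iota 1 (size P + 2)]).
Hypothesis spots_notFM : forall x, x \in s :: u :: v :: [seq sj j | j <- iota 1 (size P + 2)] ->
  (x \notin Foci) && (x \notin Meth).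
Hypothesis fs_occ : fs =i occ_foci P.
Hypothesis ms_occ : ms =i occ_meths P.

Local Notation k := (size P).
Local Notation K := (size P + 2).
Local Notation use := (@use d Spot Field PAtom Foci Meth proatom atomno).
Local Notation md_step := (@md_step d Spot Field PAtom Foci Meth proatom atomno).
Local Notation exec := (@exec_md d Spot Field PAtom Foci Meth proatom atomno).
Local Notation rho := (rho fstop fajmp ffocus fmethod fpos fneg sj).
Local Notation IT := (pga_T (interp fstop fajmp ffocus fmethod fpos fneg s u v)).
Local Notation pgld_instr := (@pgld_instr d Spot).
Local Notation mdi := (@mdi d Spot Field).
Local Notation psi := (@psi d Spot Field).
Implicit Types (sg : Spot -> option PAtom) (al : {fmap PAtom -> {fmap Field -> option PAtom}}).

(* u_j, counted from 1; out of range it is ##0, which halts. *)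
Definition instr j := nth (LAJump 0) P j.-1.

Definition pos_succ j (w : pgld_instr) := if w is LNeg _ _ then j.+2 else j.+1.
Definition neg_succ j (w : pgld_instr) := if w is LPos _ _ then j.+2 else j.+1.

Definition ajump_target j := if instr j is LAJump l then l else 0.
Definition is_ajump j := (j <= k) && (0 < ajump_target j <= k).

Definition stop_fields : {fmap Field -> option PAtom} := [fmap].[fstop <- None].

Definition instr_fields (sg : Spot -> option PAtom) j (w : pgld_instr) :=
  match w with
  | LBas f m | LPos f m | LNeg f m =>
      test_fields ffocus fmethod fpos fneg sg f m (sj (pos_succ j w)) (sj (neg_succ j w))
  | LAJump l => if 0 < l <= k then [fmap].[fajmp <- sg (sj l)] else stop_fields
  end.

Definition atom_fields sg j := if j <= k then instr_fields sg j (instr j) else stop_fields.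

Definition created := fs ++ ms ++ [seq sj j | j <- iota 1 K].

Lemma sj_created j : 0 < j <= K -> sj j \in created.
Proof. by move=> H; rewrite !mem_cat map_f ?orbT // mem_iota; lia. Qed.

Lemma sj_inj i j : 0 < i <= K -> 0 < j <= K -> sj i = sj j -> i = j.
Proof.
move=> Hi Hj; apply: (@uniq_map_inj_in _ _ sj (iota 1 K)); rewrite ?mem_iota; try lia.
by move: spots_uniq => /= /and4P [].
Qed.

Lemma instr_fm_created j f m : 0 < j <= k -> instr_fm (instr j) = Some (f, m) ->
  [/\ f \in created, m \in created, f \in Foci & m \in Meth].
Proof.
move=> Hj E; have jk : j.-1 < k by lia.
have /andP [fF mM] : (f \in Foci) && (m \in Meth).
  by move/all_nthP: P_fm => /(_ (LAJump 0) _ jk); rewrite -/(instr j) E.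
split=> //; rewrite !mem_cat.
  by rewrite fs_occ (mem_pmap_nth (x0 := LAJump 0) (i := j.-1)) //= -/(instr j) E.
by rewrite ms_occ (mem_pmap_nth (x0 := LAJump 0) (i := j.-1)) ?orbT //= -/(instr j) E.
Qed.

Lemma suv_neq : [/\ s != u, s != v & u != v].
Proof.
move: spots_uniq; rewrite /= !inE !negb_or.
by move=> /andP [/and3P [-> -> _] /andP [/andP [-> _] _]].
Qed.

Lemma suv_notFM x : (x \in Foci) || (x \in Meth) -> x \notin [:: s; u; v].
Proof.
move=> H; apply/negP => xsuv.
have /andP [] : (x \notin Foci) && (x \notin Meth).
  by apply: spots_notFM; move: xsuv; rewrite !inE => /or3P [] ->; rewrite ?orbT.
by case/orP: H => ->.
Qed.

Lemma exec_rho sg al j a w : sg (sj j) = Some a -> al.[? a] = Some [fmap] ->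
  exec (rho k j w) (Some (MDState sg al)) = Some (MDState sg al.[a <- instr_fields sg j w]).
Proof.
move=> Ex Ea; case: w => [f m|f m|f m|l]; try exact: (exec_test_code fields_uniq).
rewrite /rho /instr_fields; case: ifP => _ /=.
  rewrite (eff_addfield Ex) Ea ?inE //= (eff_setfield _ Ex) ?fnd_set ?eqxx /= ?setf_setf //.
  by rewrite !inE ?eqxx.
by rewrite (eff_addfield Ex) Ea ?inE.
Qed.

Lemma exec_rhos sg al i : i <= k ->
  (forall j, 0 < j <= K -> exists2 b, sg (sj j) = Some b & al.[? b] = Some [fmap]) ->
  (forall i j, 0 < i <= K -> 0 < j <= K -> sg (sj i) = sg (sj j) -> i = j) ->
  exists al', exec (flatten [seq rho k j.+1 (nth (LAJump 0) P j) | j <- iota 0 i])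
                   (Some (MDState sg al)) = Some (MDState sg al') /\
    forall j b, 0 < j <= K -> sg (sj j) = Some b ->
      al'.[? b] = Some (if j <= i then instr_fields sg j (instr j) else [fmap]).
Proof.
move=> + atoms sg_inj; elim: i => [|i IH] Hi.
  exists al; split=> // j b Hj Eb; have [b' Eb' Eb'a] := atoms j Hj.
  by move: Eb; rewrite Eb' => -[<-]; rewrite Eb'a ifF //; lia.
have [al' [E' H']] := IH (ltnW Hi).
have [a Ea _] := atoms i.+1 ltac:(lia).
have a_empty : al'.[? a] = Some [fmap] by rewrite (H' _ _ _ Ea) ?ltnn //; lia.
exists al'.[a <- instr_fields sg i.+1 (instr i.+1)]; split.
  rewrite -[in iota _ _]addn1 iotaD map_cat flatten_cat exec_cat E' /= cats0 add0n.
  exact: exec_rho.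
move=> j b Hj Eb; rewrite fnd_set; case: eqP => [ba|ba].
  have -> : j = i.+1 by apply: sg_inj; rewrite ?Eb ?Ea ?ba //; lia.
  by rewrite leqnn.
rewrite (H' _ _ Hj Eb); have [Ej|ji] := eqVneq j i.+1.
  by case: ba; move: Eb; rewrite Ej Ea => -[].
by rewrite [j <= i.+1]leq_eqVlt (negbTE ji) ltnS.
Qed.

Lemma exec_create_spots : exists sg1 al1,
  exec [seq mdi (create x) | x <- created] (@t_init d Spot Field PAtom) = Some (MDState sg1 al1)
  /\ (forall x, x \in created -> exists2 b, sg1 x = Some b & al1.[? b] = Some [fmap])
  /\ (forall x y, x \in created -> sg1 y = sg1 x -> y = x).
Proof.
have [sg1 [al1 [E1 [out1 [fresh1 [inj1 _]]]]]] :=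
  exec_creates (Foci := Foci) (Meth := Meth) (Field := Field) atomno_proatom created
    (fun _ => None) [fmap].
exists sg1, al1; split=> //; split; first by move=> x /fresh1 [b ? [_ ?]]; exists b.
move=> x y xC; have [b Eb _] := fresh1 x xC; have [yC|yN] := boolP (y \in created).
  exact: inj1.
by rewrite out1 // Eb.
Qed.

Lemma exec_pgldmd : exists sg1 alP,
  exec (pgldmd fstop fajmp ffocus fmethod fpos fneg s sj fs ms P) (@t_init d Spot Field PAtom)
    = Some (MDState (upd_sigma sg1 s (sg1 (sj 1))) alP)
  /\ (forall x, x \in created -> sg1 x != None)
  /\ (forall x y, x \in created -> sg1 y = sg1 x -> y = x)
  /\ (forall j b, 0 < j <= K -> sg1 (sj j) = Some b -> alP.[? b] = Some (atom_fields sg1 j)).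
Proof.
have [sg1 [al1 [E1 [fresh1 sg1_inj]]]] := exec_create_spots.
have atoms j : 0 < j <= K -> exists2 b, sg1 (sj j) = Some b & al1.[? b] = Some [fmap].
  by move/sj_created/fresh1.
have sj_inj1 i j : 0 < i <= K -> 0 < j <= K -> sg1 (sj i) = sg1 (sj j) -> i = j.
  by move=> Hi Hj E; apply: sj_inj => //; apply: sg1_inj E; apply: sj_created.
have [alR [ER HR]] := exec_rhos (leqnn k) atoms sj_inj1.
have [a1 Ea1 _] := atoms k.+1 ltac:(lia).
have R1 : alR.[? a1] = Some [fmap] by rewrite (HR _ _ _ Ea1) ?ifF //; lia.
have [a2 Ea2 _] := atoms k.+2 ltac:(lia).
have R2 : alR.[? a2] = Some [fmap] by rewrite (HR _ _ _ Ea2) ?ifF //; lia.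
have a21 : a2 != a1.
  apply/eqP => E; suff : k.+2 = k.+1 by lia.
  by apply: sj_inj1; rewrite ?Ea1 ?Ea2 ?E //; lia.
exists sg1, alR.[a1 <- stop_fields].[a2 <- stop_fields]; split.
  rewrite /pgldmd catA catA exec_cat -catA.
  have -> : [seq mdi (create f) | f <- fs] ++ [seq mdi (create m) | m <- ms] ++
            [seq mdi (create (sj j)) | j <- iota 1 K] = [seq mdi (create x) | x <- created].
    by rewrite /created !map_cat -map_comp.
  rewrite E1 exec_cat ER /=.
  by rewrite (eff_addfield Ea1) R1 ?inE //= (eff_addfield Ea2) fnd_set (negbTE a21) R2 ?inE.
split; first by move=> x /fresh1 [b -> _].
split=> // j b Hj Eb.
have notb i a : 0 < i <= K -> sg1 (sj i) = Some a -> i != j -> (b == a) = false.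
  by move=> Hi Ea ij; apply/negbTE/eqP => ba; case/eqP: ij; apply: sj_inj1; rewrite // Ea Eb ba.
have [jk | [Ej | Ej]] : j <= k \/ j = k.+1 \/ j = k.+2 by lia.
- rewrite !fnd_set (notb _ _ _ Ea1) ?(notb _ _ _ Ea2) ?(HR _ _ Hj Eb) /atom_fields ?jk //; lia.
- rewrite Ej; move: Eb; rewrite Ej Ea1 => -[<-]; rewrite fnd_set eq_sym (negbTE a21) fnd_set eqxx.
  by rewrite /atom_fields ifF //; lia.
- rewrite Ej; move: Eb; rewrite Ej Ea2 => -[<-]; rewrite fnd_set eqxx.
  by rewrite /atom_fields ifF //; lia.
Qed.

Definition pgld_code := [seq psi k j.+1 (nth (LAJump 0) P j) | j <- iota 0 k] ++ [:: ITerm; ITerm].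

Local Notation QT := (pga_T (omega pgld_code)).

Lemma instr_at_pgld j c : 0 < j <= K ->
  instr_at (omega pgld_code) (j + K * c) = Some (if j <= k then psi k j (instr j) else ITerm).
Proof.
move=> Hj; have sz : size pgld_code = K by rewrite size_cat size_map size_iota.
rewrite -sz instr_at_omega ?sz // onth_cat size_map size_iota.
case: (leqP j k) => jk.
  rewrite ifT; last by lia.
  rewrite onthE -map_comp (nth_map 0) ?size_iota ?nth_iota; try lia.
  by rewrite /= add0n prednK //; lia.
by rewrite ifF; [have [->|->] : j.-1 - k = 0 \/ j.-1 - k = 1 by lia | lia].
Qed.

Lemma ajump_target_range j : is_ajump j -> 0 < ajump_target j <= k.
Proof. by case/andP. Qed.

(* [psi] turns an absolute jump into a relative one that reaches the target,
   possibly in the next period of the omega-program. *)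
Lemma psi_ajump j : 0 < j -> is_ajump j ->
  exists x e, psi k j (instr j) = IJump x /\ j + x = ajump_target j + K * e.
Proof.
rewrite /is_ajump /ajump_target => j0 /andP [jk]; case: (instr j) => // l lk /=.
rewrite ifF; last by lia.
case: (leqP j l) => jl; first by exists (l - j), 0; split=> //; lia.
by exists (k + 2 - (j - l)), 1; split=> //; lia.
Qed.

Lemma add_period j x t e c : j + x = t + K * e -> j + K * c + x = t + K * (c + e).
Proof. by move=> E; rewrite mulnDr addnAC E -addnA (addnC (K * e)). Qed.

Lemma jiter_pgld n c j : 0 < j <= K -> (forall m, is_ajump (iter m ajump_target j)) ->
  exists c', jiter (omega pgld_code) n (j + K * c) = iter n ajump_target j + K * c'.
Proof.
elim: n c j => [|n IH] c j Hj Hjumps; first by exists c.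
have [x [e [Ex Ee]]] := psi_ajump (j := j) ltac:(lia) (Hjumps 0).
have jk : j <= k by case/andP: (Hjumps 0).
rewrite [jiter _ _ _]/= /jnext instr_at_pgld // jk Ex.
case: (posnP x) => [x0|xp].
  have Jj : ajump_target j = j by move: Ee; rewrite x0; case: e => [|e]; lia.
  have Hfix m : iter m ajump_target j = j by elim: m => //= m ->.
  by exists c; rewrite Hfix.
rewrite (add_period c Ee).
have Jr : 0 < ajump_target j <= K by have := ajump_target_range (Hjumps 0 : is_ajump j); lia.
have Hjumps' m : is_ajump (iter m ajump_target (ajump_target j)) by rewrite -iterSr.
have [c' ->] := IH (c + e) _ Jr Hjumps'.
by rewrite -iterSr; exists c'.
Qed.

Lemma pgld_jumps_forever j c : 0 < j <= K ->
  (forall m, is_ajump (iter m ajump_target j)) -> QT (j + K * c) = TD.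
Proof.
move=> Hj Hjumps; apply: pga_T_jumps_forever => n.
have [c' ->] := jiter_pgld n c Hj Hjumps.
have Hn : is_ajump (iter n ajump_target j) := Hjumps n.
have jn : 0 < iter n ajump_target j <= K.
  case: n {Hn} => [|n] /=; first lia.
  by have := ajump_target_range (Hjumps n); lia.
have [x [e [Ex _]]] := psi_ajump (j := iter n ajump_target j) ltac:(lia) Hn.
by exists x; rewrite instr_at_pgld // Ex; case/andP: Hn => ->.
Qed.

Lemma succ_range j (w : pgld_instr) : 0 < j <= k -> 0 < pos_succ j w <= K /\ 0 < neg_succ j w <= K.
Proof. by rewrite /pos_succ /neg_succ; case: w => * /=; lia. Qed.

Lemma pgld_test j c f m : 0 < j <= k -> instr_fm (instr j) = Some (f, m) ->
  QT (j + K * c) =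
  TPost (QT (pos_succ j (instr j) + K * c)) (Bas f m) (QT (neg_succ j (instr j) + K * c)).
Proof.
move=> Hj; have := @instr_at_pgld j c ltac:(lia); rewrite ifT; last by lia.
case: (instr j) => // f' m' E [<- <-].
- exact: pga_T_bas E.
- exact: pga_T_pos E.
- exact: pga_T_neg E.
Qed.

Lemma halt_code sg j : 0 < j <= K -> instr_fm (instr j) = None -> ~~ is_ajump j ->
  (if j <= k then psi k j (instr j) else ITerm) = ITerm /\ atom_fields sg j = stop_fields.
Proof.
move=> Hj Hfm; rewrite /is_ajump /atom_fields /ajump_target.
case: (leqP j k) => //= jk; move: Hfm; case: (instr j) => //= l _ Hl.
by rewrite /psi /instr_fields (negbTE Hl) ifT //; lia.
Qed.

Lemma instr_fields_test sg j w f m : instr_fm w = Some (f, m) ->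
  instr_fields sg j w =
  test_fields ffocus fmethod fpos fneg sg f m (sj (pos_succ j w)) (sj (neg_succ j w)).
Proof. by case: w => [f1 m1|f1 m1|f1 m1|l] E; [case: E => <- <- ..| discriminate]. Qed.

Lemma ajump_fields sg j : is_ajump j ->
  atom_fields sg j = [fmap].[fajmp <- sg (sj (ajump_target j))].
Proof.
by rewrite /is_ajump /atom_fields /ajump_target => /andP [-> ]; case: (instr j) => //= l ->.
Qed.

(** * The simulation *)

Section Run.
Variables (sg1 : Spot -> option PAtom) (alP : {fmap PAtom -> {fmap Field -> option PAtom}}).
Hypothesis sg1_created : forall x, x \in created -> sg1 x != None.
Hypothesis sg1_inj : forall x y, x \in created -> sg1 y = sg1 x -> y = x.
Hypothesis alP_fields :
  forall j b, 0 < j <= K -> sg1 (sj j) = Some b -> alP.[? b] = Some (atom_fields sg1 j).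

(* [s] points to the encoding of instruction [j]; only [s], [u], [v] are
   changed by the interpreter. *)
Definition at_instr j (t : @mstate d Spot Field PAtom) :=
  exists2 sg, t = Some (MDState sg alP) &
    sg s = sg1 (sj j) /\ forall x, x \notin [:: s; u; v] -> sg x = sg1 x.

(* [c'] and [c] count the periods of the two omega-programs. *)
Definition agree n j t := forall c' c,
  proj n (QT (j + K * c')) = proj n (tau_tau (use (IT (1 + 13 * c)) t)).

Lemma at_instr_atom j t : 0 < j <= K -> at_instr j t ->
  exists sg b, [/\ t = Some (MDState sg alP), sg s = Some b,
    alP.[? b] = Some (atom_fields sg1 j) & forall x, x \notin [:: s; u; v] -> sg x = sg1 x].
Proof.
move=> Hj [sg -> [Es Eo]]; have := sg1_created (sj_created Hj).
by case Eb: (sg1 (sj j)) => [b|] // _; exists sg, b; split; rewrite ?Es // (alP_fields Hj Eb).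
Qed.

Lemma at_instr_upd sg j : (forall x, x \notin [:: s; u; v] -> sg x = sg1 x) ->
  at_instr j (Some (MDState (upd_sigma sg s (sg1 (sj j))) alP)).
Proof.
move=> Eo; exists (upd_sigma sg s (sg1 (sj j))) => //; split; first by rewrite /upd_sigma eqxx.
move=> x xN; rewrite /upd_sigma ifF ?Eo //.
by apply/negbTE; move: xN; rewrite !inE negb_or => /andP [].
Qed.

Lemma genact_at sg f m : (forall x, x \notin [:: s; u; v] -> sg x = sg1 x) ->
  f \in created -> m \in created -> f \in Foci -> m \in Meth ->
  let sg' := upd_sigma (upd_sigma sg u (sg1 f)) v (sg1 m) in
  md_step (genact u v) (Some (MDState sg' alP)) = (Some (MDState sg' alP), YM f m).
Proof.
move=> Eo fC mC fF mM sg'; have [_ _ uv] := suv_neq.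
have sg'_FM x : (x \in Foci) || (x \in Meth) -> sg' x = sg1 x.
  move/suv_notFM => xN; move: (xN); rewrite !inE !negb_or => /and3P [_ xu xv].
  by rewrite /sg' /upd_sigma (negbTE xu) (negbTE xv) Eo.
have sg'f : sg' f = sg1 f by rewrite sg'_FM ?fF.
have sg'm : sg' m = sg1 m by rewrite sg'_FM ?mM ?orbT.
apply: genact_least; rewrite ?sg'f ?sg'm ?sg1_created //.
- by rewrite /sg' /upd_sigma (negbTE uv) !eqxx.
- by rewrite /sg' /upd_sigma eqxx.
- by move=> g gF; rewrite sg'_FM ?gF //; apply: sg1_inj.
- by move=> g gM; rewrite sg'_FM ?gM ?orbT //; apply: sg1_inj.
Qed.

Lemma use_test j c t f m : 0 < j <= k -> instr_fm (instr j) = Some (f, m) -> at_instr j t ->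
  exists tp tq, [/\ at_instr (pos_succ j (instr j)) tp, at_instr (neg_succ j (instr j)) tq &
    tau_tau (use (IT (1 + 13 * c)) t) =
    TPost (tau_tau (use (IT (1 + 13 * c.+1)) tp)) (Bas f m)
          (tau_tau (use (IT (1 + 13 * c.+1)) tq))].
Proof.
move=> Hj Hfm /(at_instr_atom (j := j) ltac:(lia)) [sg [b [-> Eb Eab Eo]]].
have [fC mC fF mM] := instr_fm_created Hj Hfm.
rewrite /atom_fields ifT ?(instr_fields_test _ _ Hfm) in Eab; last by lia.
have [Hstop Hajmp Hf Hm [Hp Hq]] := test_fieldsE fields_uniq sg1 f m
  (sj (pos_succ j (instr j))) (sj (neg_succ j (instr j))).
have [su sv _] := suv_neq.
set sg' := upd_sigma (upd_sigma sg u (sg1 f)) v (sg1 m).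
have sg'_off x : x \notin [:: s; u; v] -> sg' x = sg1 x.
  move=> xN; move: (xN); rewrite !inE !negb_or => /and3P [_ xu xv].
  by rewrite /sg' /upd_sigma (negbTE xu) (negbTE xv) Eo.
rewrite (interp_test Eb Eab c su sv Hstop Hajmp Hf Hm Hp Hq (genact_at Eo fC mC fF mM)).
rewrite !tau_tau_tau tau_tau_post !tau_tau_tau.
by do 2 eexists; split; last reflexivity; apply: at_instr_upd.
Qed.

Lemma use_ajump j c t : 0 < j <= K -> is_ajump j -> at_instr j t ->
  exists2 t', at_instr (ajump_target j) t' &
    use (IT (1 + 13 * c)) t = TTau (TTau (TTau (use (IT (1 + 13 * c.+1)) t'))).
Proof.
move=> Hj Hjmp /(at_instr_atom Hj) [sg [b [-> Eb Eab Eo]]].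
rewrite ajump_fields // in Eab; set fl := [fmap].[_ <- _] in Eab.
have Hstop : fstop \notin domf fl by rewrite dom_setf !inE (field_neqE fields_uniq).
have Htgt : fl.[? fajmp] = Some (sg1 (sj (ajump_target j))) by rewrite fnd_set eqxx.
by rewrite (interp_ajmp Eb Eab c Hstop Htgt); eexists; first exact: at_instr_upd Eo.
Qed.

Lemma agree_halt n j t : 0 < j <= K -> instr_fm (instr j) = None -> ~~ is_ajump j ->
  at_instr j t -> agree n j t.
Proof.
move=> Hj Hfm Hjmp /(at_instr_atom Hj) [sg [b [-> Eb Eab _]]] c' c.
have [Hcode Hfl] := halt_code sg1 Hj Hfm Hjmp.
rewrite pga_T_term ?instr_at_pgld ?Hcode // (interp_stop Eb Eab) ?tau_tau_tau ?tau_tau_S //.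
by rewrite Hfl dom_setf !inE eqxx.
Qed.

Lemma agree_test n j t f m : 0 < j <= k -> instr_fm (instr j) = Some (f, m) -> at_instr j t ->
  (forall t', at_instr (pos_succ j (instr j)) t' -> agree n (pos_succ j (instr j)) t') ->
  (forall t', at_instr (neg_succ j (instr j)) t' -> agree n (neg_succ j (instr j)) t') ->
  agree n.+1 j t.
Proof.
move=> Hj Hfm Ht IHp IHq c' c; have [tp [tq [Hp Hq ->]]] := use_test c Hj Hfm Ht.
by rewrite (pgld_test c' Hj Hfm) /=; congr FPost; [apply: IHp | apply: IHq].
Qed.

Lemma agree_ajump n j t : 0 < j <= K -> is_ajump j -> ajump_target j != j -> at_instr j t ->
  (forall t', at_instr (ajump_target j) t' -> agree n (ajump_target j) t') -> agree n j t.
Proof.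
move=> Hj Hjmp Jj Ht IH c' c; have [t' Ht' ->] := use_ajump c Hj Hjmp Ht.
have [x [e [Ex Ee]]] := psi_ajump (j := j) ltac:(lia) Hjmp.
have xp : 0 < x.
  rewrite lt0n; apply: contra Jj => /eqP x0; apply/eqP; move: Ee; rewrite x0.
  by have := ajump_target_range Hjmp; case: e => [|e]; lia.
rewrite !tau_tau_tau (pga_T_jump _ xp); last by rewrite instr_at_pgld ?ifT ?Ex //; case/andP: Hjmp.
by rewrite (add_period c' Ee); apply: IH.
Qed.

Lemma use_ajumps_taus N j c t : 0 < j <= K -> (forall m, is_ajump (iter m ajump_target j)) ->
  at_instr j t -> is_tau (tau_strip N (use (IT (1 + 13 * c)) t)).
Proof.
elim/ltn_ind: N j c t => N IH j c t Hj Hjumps Ht.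
have [t' Ht' ->] := use_ajump c Hj (Hjumps 0) Ht.
case: N IH => [|[|[|N]]] IH //=.
have Jr : 0 < ajump_target j <= K by have := ajump_target_range (Hjumps 0 : is_ajump j); lia.
apply: (IH N _ (ajump_target j) c.+1 _ Jr) => //; last by move=> m; rewrite -iterSr.
by rewrite ltnS leqW.
Qed.

Lemma agree_diverge n j t : 0 < j <= K -> (forall m, is_ajump (iter m ajump_target j)) ->
  at_instr j t -> agree n j t.
Proof.
move=> Hj Hjumps Ht c' c.
rewrite pgld_jumps_forever // tau_tau_taus // => N.
exact: (use_ajumps_taus N c Hj Hjumps Ht).
Qed.

Lemma agree_all n j t : 0 < j <= K -> at_instr j t -> agree n j t.
Proof.
elim: n j t => [|n IHn] j t Hj Ht; first by move=> c' c.
have step j' t' : 0 < j' <= K -> ~~ is_ajump j' -> at_instr j' t' -> agree n.+1 j' t'.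
  move=> Hj' Hn' Ht'; case Efm: (instr_fm (instr j')) => [[f m]|]; last exact: agree_halt.
  have j'k : 0 < j' <= k.
    case: (leqP j' k) => jk; first lia.
    by move: Efm; rewrite /instr nth_default //; lia.
  by have [? ?] := succ_range (instr j') j'k; apply: (agree_test j'k Efm Ht') => t'' /IHn; apply.
have [[m Hm]|Hjumps] := classic (exists m, ~~ is_ajump (iter m ajump_target j)); last first.
  by apply: agree_diverge => // m; apply/negPn/negP => H; apply: Hjumps; exists m.
elim: m j t Hj Ht Hm => [|m IHm] j t Hj Ht Hm; first exact: step.
case: (boolP (is_ajump j)) => Hjmp; last exact: step.
have [Jj|Jj] := eqVneq (ajump_target j) j; first by apply: IHm => //; rewrite iterSr Jj in Hm.
apply: agree_ajump => // t' Ht'; apply: IHm => //; last by rewrite -iterSr.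
by have := ajump_target_range Hjmp; lia.
Qed.

End Run.

Lemma pgld_simulation :
  thr_eq (pgld_beh P)
    (tau_tau (use (pga_beh (interp fstop fajmp ffocus fmethod fpos fneg s u v))
                  (exec (pgldmd fstop fajmp ffocus fmethod fpos fneg s sj fs ms P)
                        (@t_init d Spot Field PAtom)))).
Proof.
have [sg1 [alP [-> [Hc [Hinj Hfl]]]]] := exec_pgldmd.
move=> n; have Hat := @at_instr_upd sg1 alP sg1 1 (fun _ _ => erefl).
have H1 : 0 < 1 <= K by lia.
by have := agree_all Hc Hinj Hfl n H1 Hat 0 0; rewrite muln0 addn0.
Qed.

End Simulation.

Theorem theorem1
  (d : Order.disp_t) (Spot : finOrderType d) (Foci Meth : {set Spot})
  (Field : finType) (fstop fajmp ffocus fmethod fpos fneg : Field)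
  (PAtom : choiceType) (proatom : nat -> PAtom) (atomno : PAtom -> nat)
  (s u v : Spot) (sj : nat -> Spot)
  (P : seq (@pgld_instr d Spot)) (fs ms : seq Spot) :
  [disjoint Foci & Meth] ->
  uniq [:: fstop; fajmp; ffocus; fmethod; fpos; fneg] ->
  (* proatom is a bijection from N_{>=1} onto PAtom, with inverse atomno *)
  (forall n, 0 < n -> atomno (proatom n) = n) ->
  (forall a, 0 < atomno a /\ proatom (atomno a) = a) ->
  (* k >= 1 *)
  0 < size P ->
  (* basic instructions of P are f.m with f a focus and m a method *)
  all (fun w => if instr_fm w is Some (f, m) then (f \in Foci) && (m \in Meth) else true) P ->
  (* s, u, v, s_1, ..., s_(k+2) pairwise distinct spots, outside Foci and Meth *)
  uniq (s :: u :: v :: [seq sj j | j <- iota 1 (size P + 2)]) ->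
  (forall x, x \in s :: u :: v :: [seq sj j | j <- iota 1 (size P + 2)] ->
     (x \notin Foci) && (x \notin Meth)) ->
  (* fs, ms: the distinct occurring foci / methods of P *)
  uniq fs -> fs =i occ_foci P ->
  uniq ms -> ms =i occ_meths P ->
  thr_eq (pgld_beh P)
    (tau_tau (use Foci Meth proatom atomno
                  (pga_beh (interp fstop fajmp ffocus fmethod fpos fneg s u v))
                  (exec_md Foci Meth proatom atomno
                     (pgldmd fstop fajmp ffocus fmethod fpos fneg s sj fs ms P)
                     (@t_init d Spot Field PAtom)))).
Proof.
move=> _ fields_uniq atomno_proatom _ _ P_fm spots_uniq spots_notFM _ fs_occ _ ms_occ.
exact: pgld_simulation.
Qed.
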